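(* Let $F$ be a field, let $A_n$ be a Cayley--Dickson algebra over $F$ and $A_{n+1}=A_n\{\gamma_n\}$ for some $\gamma_n\in F^\times$. Let $a,b\in A_n$ be alternative elements of $A_n$, and assume that either $a\in F$, or $b\in F$, or $F+Fa=F+Fb$. Then $(a,b)$ is an alternative element of $A_{n+1}$.
   Context: For an $F$-algebra $B$ with involution $a\mapsto\bar a$ and $\gamma\in F^\times$, the Cayley--Dickson double $B\{\gamma\}$ is $B\times B$ with componentwise addition and scalar multiplication, product $(a,b)(c,d)=(ac+\gamma\bar d b,\ da+b\bar c)$ and involution $\overline{(a,b)}=(\bar a,-b)$. Cayley--Dickson algebras over $F$: $A_1=F[\ell_1:\ell_1^2=\ell_1+\mu]=F+F\ell_1$ with $\mu\in F$, $4\mu+1\neq 0$, and involution $\overline{\alpha+\beta\ell_1}=(\alpha+\beta)-\beta\ell_1$; then $A_{k+1}=A_k\{\gamma_k\}$ with $\gamma_k\in F^\times$. ($F$ is identified with $F\cdot 1$.) An element $a$ of an algebra $A$ is alternative if $a(ab)=a^2b$ and $(ba)a=ba^2$ for all $b\in A$. *)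

From HB Require Import structures.
From mathcomp Require Import all_boot all_algebra.
Set Implicit Arguments. Unset Strict Implicit. Unset Printing Implicit Defensive.
Import GRing.Theory.
Local Open Scope ring_scope.

(* Indexing: [cdT F m] is the carrier of A_(m+1); so cdT F 0 = A_1 = F + F l_1
   (pairs (alpha, beta) meaning alpha + beta l_1), and
   cdT F m.+1 = cdT F m * cdT F m is the Cayley--Dickson double of A_(m+1),
   using the parameter [gam m]. *)
Section CD.
Variable F : fieldType.
Variable mu : F.
Variable gam : nat -> F.

Fixpoint cdT (m : nat) : Type :=
  match m with 0 => (F * F)%type | k.+1 => (cdT k * cdT k)%type end.

Fixpoint cd_add (m : nat) : cdT m -> cdT m -> cdT m :=
  match m return cdT m -> cdT m -> cdT m with
  | 0 => fun x y => (x.1 + y.1, x.2 + y.2)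
  | k.+1 => fun x y => (cd_add x.1 y.1, cd_add x.2 y.2)
  end.

Fixpoint cd_scale (m : nat) (c : F) : cdT m -> cdT m :=
  match m return cdT m -> cdT m with
  | 0 => fun x => (c * x.1, c * x.2)
  | k.+1 => fun x => (cd_scale c x.1, cd_scale c x.2)
  end.

Fixpoint cd_emb (m : nat) (c : F) : cdT m :=
  match m return cdT m with
  | 0 => (c, 0)
  | k.+1 => (cd_emb k c, cd_emb k 0)
  end.

Fixpoint cd_conj (m : nat) : cdT m -> cdT m :=
  match m return cdT m -> cdT m with
  | 0 => fun x => (x.1 + x.2, - x.2)
  | k.+1 => fun x => (cd_conj x.1, cd_scale (-1) x.2)
  end.

(* (a,b)(c,d) = (ac + gamma * dbar b, da + b cbar) ;
   on A_1: (al + be l)(al' + be' l) with l^2 = l + mu. *)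
Fixpoint cd_mul (m : nat) : cdT m -> cdT m -> cdT m :=
  match m return cdT m -> cdT m -> cdT m with
  | 0 => fun x y => (x.1 * y.1 + mu * (x.2 * y.2),
                     x.1 * y.2 + x.2 * y.1 + x.2 * y.2)
  | k.+1 => fun x y =>
      (cd_add (cd_mul x.1 y.1) (cd_scale (gam k) (cd_mul (cd_conj y.2) x.2)),
       cd_add (cd_mul y.2 x.1) (cd_mul x.2 (cd_conj y.1)))
  end.

Definition cd_alternative (m : nat) (a : cdT m) : Prop :=
  forall b : cdT m,
    cd_mul a (cd_mul a b) = cd_mul (cd_mul a a) b /\
    cd_mul (cd_mul b a) a = cd_mul b (cd_mul a a).

Definition cd_inF (m : nat) (a : cdT m) : Prop := exists c : F, a = cd_emb m c.

Definition cd_span1 (m : nat) (a x : cdT m) : Prop :=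
  exists al be : F, x = cd_add (cd_emb m al) (cd_scale be a).

End CD.

From HB Require Import structures.
From mathcomp Require Import all_boot all_algebra.
From mathcomp Require Import boolp ring.
Set Implicit Arguments. Unset Strict Implicit. Unset Printing Implicit Defensive.
Import GRing.Theory.
Local Open Scope ring_scope.

(* Write x = (a, b), y = (c, d) and expand both alternative laws for x
   componentwise with the doubling formula.  Alternativity of a and of abar
   disposes of the terms quadratic in a, and alternativity of b gives
   bbar (b z) = b (bbar z) = (z bbar) b = N(b) z, which disposes of the terms
   containing b twice.  The remaining mixed terms combine through the trace
   a + abar in F as soon as a and b associate in the middle, u (z v) = (u z) v
   for {u, v} = {a, b}.  This is trivial when a or b is a scalar; when b lies
   in F + F a it reduces to the flexible law (a z) a = a (z a), which every
   alternative a satisfies by the polarized norm identity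
   u vbar + v ubar = ubar v + vbar u. *)

Section CDModule.
Variables (F : fieldType) (m : nat).
Implicit Types x y z : cdT F m.

Lemma cd_addA x y z : cd_add x (cd_add y z) = cd_add (cd_add x y) z.
Proof.
by elim: m x y z => [|k IH] [x1 x2] [y1 y2] [z1 z2] /=; rewrite ?IH ?addrA.
Qed.

Lemma cd_addC x y : cd_add x y = cd_add y x.
Proof.
elim: m x y => [|k IH] [x1 x2] [y1 y2] /=; last by rewrite IH (IH x2).
by rewrite addrC (addrC x2).
Qed.

Lemma cd_add0 x : cd_add (cd_emb m 0) x = x.
Proof. by elim: m x => [|k IH] [x1 x2] /=; rewrite ?IH ?add0r. Qed.

Lemma cd_addNr x : cd_add (cd_scale (-1) x) x = cd_emb m 0.
Proof. by elim: m x => [|k IH] [x1 x2] /=; rewrite ?IH // !mulN1r !addNr. Qed.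

Lemma cd_scaleA a b x : cd_scale a (cd_scale b x) = cd_scale (a * b) x.
Proof. by elim: m x => [|k IH] [x1 x2] /=; rewrite ?IH ?mulrA. Qed.

Lemma cd_scale1 x : cd_scale 1 x = x.
Proof. by elim: m x => [|k IH] [x1 x2] /=; rewrite ?IH ?mul1r. Qed.

Lemma cd_scaleDr a x y :
  cd_scale a (cd_add x y) = cd_add (cd_scale a x) (cd_scale a y).
Proof. by elim: m x y => [|k IH] [x1 x2] [y1 y2] /=; rewrite ?IH ?mulrDr. Qed.

Lemma cd_scaleDl x a b :
  cd_scale (a + b) x = cd_add (cd_scale a x) (cd_scale b x).
Proof. by elim: m x => [|k IH] [x1 x2] /=; rewrite ?IH ?mulrDl. Qed.

End CDModule.

Definition cdalg (F : fieldType) (m : nat) := cdT F m.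
HB.instance Definition _ (F : fieldType) m := gen_eqMixin (cdalg F m).
HB.instance Definition _ (F : fieldType) m := gen_choiceMixin (cdalg F m).
HB.instance Definition _ (F : fieldType) m :=
  GRing.isZmodule.Build (cdalg F m)
    (@cd_addA F m) (@cd_addC F m) (@cd_add0 F m) (@cd_addNr F m).
HB.instance Definition _ (F : fieldType) m :=
  GRing.Zmodule_isLmodule.Build F (cdalg F m)
    (@cd_scaleA F m) (@cd_scale1 F m) (@cd_scaleDr F m) (@cd_scaleDl F m).

Section CDAlgebra.
Variables (F : fieldType) (mu : F) (gam : nat -> F).

Definition cdmul m (x y : cdalg F m) : cdalg F m := cd_mul mu gam x y.
Definition cdconj m (x : cdalg F m) : cdalg F m := cd_conj x.
Definition cdemb m (c : F) : cdalg F m := cd_emb m c.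
Local Notation "x ** y" := (cdmul x y) (at level 40, left associativity).

Lemma cd_addE m (x y : cdalg F m) : cd_add x y = x + y. Proof. by []. Qed.
Lemma cd_scaleE m c (x : cdalg F m) : cd_scale c x = c *: x. Proof. by []. Qed.
Lemma cd_emb0E m : cd_emb m 0 = 0 :> cdalg F m. Proof. by []. Qed.
Lemma cd_mulE m (x y : cdalg F m) : cd_mul mu gam x y = x ** y. Proof. by []. Qed.
Lemma cd_conjE m (x : cdalg F m) : cd_conj x = cdconj x. Proof. by []. Qed.
Lemma cd_embE m c : cd_emb m c = cdemb m c. Proof. by []. Qed.
Definition cdE := (cd_addE, cd_scaleE, cd_emb0E, cd_mulE, cd_conjE, cd_embE).

(* One doubling step: the vector-space operations are turned back into
   cd_add/cd_scale so that they compute on pairs, then everything is folded. *)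
Local Ltac cd_unfold :=
  rewrite /cdmul /cdconj /cdemb -?cd_addE -?cd_scaleE /= ?cdE.

Lemma cdemb0 m : cdemb m 0 = 0. Proof. by []. Qed.

Lemma cdembD m c d : cdemb m (c + d) = cdemb m c + cdemb m d.
Proof.
elim: m => [|k IH]; cd_unfold; first by congr pair; ring.
by rewrite IH addr0.
Qed.

Lemma cdembZ m c d : c *: cdemb m d = cdemb m (c * d).
Proof.
elim: m => [|k IH]; cd_unfold; first by congr pair; ring.
by rewrite IH scaler0.
Qed.

Lemma cdconjD m (x y : cdalg F m) : cdconj (x + y) = cdconj x + cdconj y.
Proof.
elim: m x y => [|k IH] [x1 x2] [y1 y2]; cd_unfold; first by congr pair; ring.
by rewrite IH scalerDr.
Qed.

Lemma cdconjZ m c (x : cdalg F m) : cdconj (c *: x) = c *: cdconj x.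
Proof.
elim: m x => [|k IH] [x1 x2]; cd_unfold; first by congr pair; ring.
by rewrite IH !scalerA mulrC.
Qed.

Lemma cdconjK m : involutive (@cdconj m).
Proof.
elim: m => [|k IH] [x1 x2]; cd_unfold; first by congr pair; ring.
by rewrite IH scalerA mulrNN mulr1 scale1r.
Qed.

Lemma cdconj_emb m c : cdconj (cdemb m c) = cdemb m c.
Proof.
elim: m => [|k IH]; cd_unfold; first by congr pair; ring.
by rewrite IH scaler0.
Qed.

Lemma cdmulD m :
  (forall x y z : cdalg F m, (x + y) ** z = x ** z + y ** z) /\
  (forall x y z : cdalg F m, x ** (y + z) = x ** y + x ** z).
Proof.
elim: m => [|k [IHl IHr]]; split=> [] [x1 x2] [y1 y2] [z1 z2]; cd_unfold;
  try by congr pair; ring.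
  by rewrite !IHl !IHr scalerDr; congr pair; rewrite addrACA.
by rewrite !cdconjD !IHl !IHr scalerDr; congr pair; rewrite addrACA.
Qed.

Lemma cdmulDl m (x y z : cdalg F m) : (x + y) ** z = x ** z + y ** z.
Proof. exact: (cdmulD m).1. Qed.

Lemma cdmulDr m (x y z : cdalg F m) : x ** (y + z) = x ** y + x ** z.
Proof. exact: (cdmulD m).2. Qed.

Lemma cdmulZ m :
  (forall c (x y : cdalg F m), (c *: x) ** y = c *: (x ** y)) /\
  (forall c (x y : cdalg F m), x ** (c *: y) = c *: (x ** y)).
Proof.
elim: m => [|k [IHl IHr]]; split=> c [x1 x2] [y1 y2]; cd_unfold;
  try by congr pair; ring.
  by rewrite !IHl !IHr !scalerDr !scalerA (mulrC c).
by rewrite !cdconjZ !IHl !IHr !scalerDr !scalerA (mulrC c).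
Qed.

Lemma cdmulZl m c (x y : cdalg F m) : (c *: x) ** y = c *: (x ** y).
Proof. exact: (cdmulZ m).1. Qed.

Lemma cdmulZr m c (x y : cdalg F m) : x ** (c *: y) = c *: (x ** y).
Proof. exact: (cdmulZ m).2. Qed.

Lemma cdmul0l m (x : cdalg F m) : 0 ** x = 0.
Proof. by rewrite -(scale0r x) cdmulZl !scale0r. Qed.

Lemma cdmul0r m (x : cdalg F m) : x ** 0 = 0.
Proof. by rewrite -(scale0r x) cdmulZr !scale0r. Qed.

Lemma cdmulNl m (x y : cdalg F m) : (- x) ** y = - (x ** y).
Proof. by rewrite -!scaleN1r cdmulZl. Qed.

Lemma cdmulNr m (x y : cdalg F m) : x ** (- y) = - (x ** y).
Proof. by rewrite -!scaleN1r cdmulZr. Qed.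

Lemma cdmulBl m (x y z : cdalg F m) : (x - y) ** z = x ** z - y ** z.
Proof. by rewrite cdmulDl cdmulNl. Qed.

Lemma cdmulBr m (x y z : cdalg F m) : x ** (y - z) = x ** y - x ** z.
Proof. by rewrite cdmulDr cdmulNr. Qed.

Lemma cdmul_emb m :
  (forall c (x : cdalg F m), cdemb m c ** x = c *: x) /\
  (forall c (x : cdalg F m), x ** cdemb m c = c *: x).
Proof.
elim: m => [|k [IHl IHr]]; split=> c [x1 x2]; cd_unfold;
  try by congr pair; ring.
  by rewrite IHl IHr cdmul0r cdmul0l scaler0 !addr0.
by rewrite IHl cdconj_emb -(cdemb0 k) cdconj_emb cdemb0 cdmul0l scaler0 addr0
  scale0r add0r !IHr.
Qed.

Lemma cdmul_embl m c (x : cdalg F m) : cdemb m c ** x = c *: x.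
Proof. exact: (cdmul_emb m).1. Qed.

Lemma cdmul_embr m c (x : cdalg F m) : x ** cdemb m c = c *: x.
Proof. exact: (cdmul_emb m).2. Qed.

Lemma cdconjM m (x y : cdalg F m) : cdconj (x ** y) = cdconj y ** cdconj x.
Proof.
elim: m x y => [|k IH] [x1 x2] [y1 y2]; cd_unfold; first by congr pair; ring.
rewrite cdconjD !cdconjZ !IH !cdconjK cdmulZl cdmulZr scalerA mulrNN mulr1.
by rewrite scale1r scalerDr !cdmulZl; congr pair; apply: addrC.
Qed.

Fixpoint cdtr m : cdT F m -> F :=
  match m return cdT F m -> F with
  | 0 => fun x => x.1 + x.1 + x.2
  | k.+1 => fun x => cdtr x.1
  end.

Fixpoint cdnorm m : cdT F m -> F :=
  match m return cdT F m -> F with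
  | 0 => fun x => x.1 * (x.1 + x.2) - mu * (x.2 * x.2)
  | k.+1 => fun x => cdnorm x.1 - gam k * cdnorm x.2
  end.

Lemma cdadd_conj m (x : cdalg F m) : x + cdconj x = cdemb m (cdtr x).
Proof.
elim: m x => [|k IH] [x1 x2]; cd_unfold; first by congr pair; ring.
by rewrite IH scaleN1r subrr.
Qed.

Lemma cdmul_conj m :
  (forall x : cdalg F m, x ** cdconj x = cdemb m (cdnorm x)) /\
  (forall x : cdalg F m, cdconj x ** x = cdemb m (cdnorm x)).
Proof.
elim: m => [|k [IHr IHl]]; split=> [] [x1 x2]; cd_unfold;
  try by congr pair; ring.
  rewrite !cdconjZ cdconjK !cdmulZl IHr IHl !cdembZ -cdembD scaleN1r addNr.
  by congr (pair (cdemb k _) _); ring.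
rewrite cdmulZr cdmulZl !IHl scaleN1r addrN -scaleN1r !cdembZ -cdembD.
by congr (pair (cdemb k _) _); ring.
Qed.

Lemma cdmul_conjr m (x : cdalg F m) : x ** cdconj x = cdemb m (cdnorm x).
Proof. exact: (cdmul_conj m).1. Qed.

Lemma cdmul_conjl m (x : cdalg F m) : cdconj x ** x = cdemb m (cdnorm x).
Proof. exact: (cdmul_conj m).2. Qed.

Lemma cdconjE m (x : cdalg F m) : cdconj x = cdemb m (cdtr x) - x.
Proof. by rewrite -cdadd_conj addrC addKr. Qed.

Lemma cdsqrE m (x : cdalg F m) : x ** x = cdtr x *: x - cdemb m (cdnorm x).
Proof.
by rewrite -(cdmul_conjr x) cdconjE cdmulBr cdmul_embr opprB addrC subrK.
Qed.

Lemma cdmul_conj_sym m (u v : cdalg F m) :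
  u ** cdconj v + v ** cdconj u = cdconj u ** v + cdconj v ** u.
Proof.
rewrite !cdconjE !cdmulBr !cdmulBl !cdmul_embr !cdmul_embl.
by rewrite addrACA [RHS]addrACA (addrC (cdtr v *: u)).
Qed.

Section Alternative.
Variables (m : nat) (u : cdalg F m).
Hypothesis hu : cd_alternative mu gam u.
Implicit Type y : cdalg F m.

Lemma alt_assocl y : u ** (u ** y) = u ** u ** y. Proof. exact: (hu y).1. Qed.
Lemma alt_assocr y : y ** u ** u = y ** (u ** u). Proof. exact: (hu y).2. Qed.

Lemma alt_conj_mulK y : cdconj u ** (u ** y) = cdnorm u *: y.
Proof.
rewrite cdconjE cdmulBl cdmul_embl alt_assocl cdsqrE cdmulBl cdmulZl cdmul_embl.
by rewrite opprB addrC subrK.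
Qed.

Lemma alt_mul_conjK y : u ** (cdconj u ** y) = cdnorm u *: y.
Proof.
rewrite cdconjE cdmulBl cdmul_embl cdmulBr cdmulZr alt_assocl cdsqrE cdmulBl.
by rewrite cdmulZl cdmul_embl opprB addrC subrK.
Qed.

Lemma alt_mulK_conj y : y ** cdconj u ** u = cdnorm u *: y.
Proof.
rewrite cdconjE cdmulBr cdmul_embr cdmulBl cdmulZl alt_assocr cdsqrE cdmulBr.
by rewrite cdmulZr cdmul_embr opprB addrC subrK.
Qed.

Lemma alt_conj : cd_alternative mu gam (cdconj u).
Proof.
move=> y; split; apply: (can_inj (@cdconjK m)); rewrite !cdconjM !cdconjK.
  by rewrite alt_assocr.
by rewrite alt_assocl.
Qed.

Lemma alt_flexible y : u ** y ** u = u ** (y ** u).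
Proof.
(* the norm identity for (u y, u) reads tr(y) N(u) + u (y u) - (u y) u = N(u) tr(y) *)
have := cdmul_conj_sym (u ** y) u.
rewrite cdconjM alt_mulK_conj alt_conj_mulK -scalerDr [_ + y]addrC cdadd_conj.
rewrite [cdconj y]cdconjE cdmulBl cdmul_embl cdmulBr cdmulZr cdmul_conjr.
rewrite cdconjE !cdmulBr !cdmul_embr cdmulZr !cdembZ mulrC.
rewrite opprB addrCA [_ - _ + _]addrC subrKA -[RHS]addr0 => /addrI /eqP.
by rewrite subr_eq0 => /eqP.
Qed.
End Alternative.

Definition mid_assoc m (u v : cdalg F m) := forall y, u ** (y ** v) = u ** y ** v.

Lemma mid_assoc_conjl m (u v : cdalg F m) :
  mid_assoc u v -> mid_assoc (cdconj u) v.
Proof. by move=> huv y; rewrite cdconjE !cdmulBl !cdmul_embl cdmulZl huv. Qed.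

Lemma mid_assoc_conjr m (u v : cdalg F m) :
  mid_assoc u v -> mid_assoc u (cdconj v).
Proof. by move=> huv y; rewrite cdconjE !cdmulBr !cdmul_embr cdmulZr huv. Qed.

Lemma mid_assoc_embl m c (v : cdalg F m) : mid_assoc (cdemb m c) v.
Proof. by move=> y; rewrite !cdmul_embl cdmulZl. Qed.

Lemma mid_assoc_embr m (u : cdalg F m) c : mid_assoc u (cdemb m c).
Proof. by move=> y; rewrite !cdmul_embr cdmulZr. Qed.

Lemma alt_span_mid_assoc m (u v : cdalg F m) :
  cd_alternative mu gam u -> cd_span1 u v -> mid_assoc u v /\ mid_assoc v u.
Proof.
move=> hu [al [be ->]]; rewrite !cdE.
split=> y; rewrite !(cdmulDl, cdmulDr, cdmulZl, cdmulZr, cdmul_embl, cdmul_embr);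
  by rewrite alt_flexible.
Qed.

Lemma double_alternative m (a b : cdalg F m) :
    cd_alternative mu gam a -> cd_alternative mu gam b ->
    mid_assoc a b -> mid_assoc b a -> @cd_alternative F mu gam m.+1 (a, b).
Proof.
move=> ha hb hab hba [c d] /=.
rewrite !cdE -cdmulDr cdadd_conj cdmul_embr cdmul_conjl.
split; congr pair.
- rewrite !cdmulDr !cdmulZr cdconjD !cdconjM !cdmulDl cdmulZl cdconjK.
  rewrite alt_assocl // alt_mulK_conj // cdmul_embl.
  rewrite -[cdtr a *: _]cdmulZl -[cdtr a *: _]cdmul_embl -cdadd_conj !cdmulDl -hab.
  by rewrite -!addrA -!scalerDr [cdnorm b *: _ + _]addrC addrA.
- rewrite cdconjD cdconjZ !cdconjM !cdmulDl !cdmulDr !cdmulZr cdmul_embr cdconjK.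
  rewrite alt_assocr // alt_mul_conjK // cdmulZl.
  rewrite -[cdtr a *: _]cdmul_embr -cdadd_conj cdmulDr -(mid_assoc_conjr hba).
  by rewrite [RHS]addrACA [gam m *: _ + _]addrC.
- rewrite !cdmulDl !cdmulDr !cdmulZl !cdmulZr cdmul_embr cdconjZ cdmulZl.
  rewrite alt_assocr // alt_conj_mulK //.
  rewrite -[cdtr a *: _]cdmulZr -[cdtr a *: _]cdmul_embr -cdadd_conj !cdmulDr.
  by rewrite (mid_assoc_conjl hba) -!addrA -!scalerDr addrCA.
- rewrite !cdmulDl !cdmulDr !cdmulZr cdconjD !cdconjZ cdconjM cdconj_emb cdmulZl.
  rewrite cdmulDr cdmulZr cdmul_embr alt_mul_conjK // (alt_assocr (alt_conj ha)).
  rewrite -[cdtr a *: _]cdmul_embr -cdadd_conj cdmulDr -hba.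
  by rewrite [d ** _ + _]addrC [RHS]addrACA.
Qed.
End CDAlgebra.

Theorem proposition2p2 (F : fieldType) (mu : F) (gam : nat -> F)
    (hmu : 4%:R * mu + 1 != 0) (hgam : forall k, gam k != 0)
    (m : nat) (a b : cdT F m)
    (ha : cd_alternative mu gam a) (hb : cd_alternative mu gam b)
    (hab : cd_inF a \/ cd_inF b \/
           (forall x : cdT F m, cd_span1 a x <-> cd_span1 b x)) :
  @cd_alternative F mu gam m.+1 (a, b).
Proof.
have [mid_ab mid_ba] : mid_assoc mu gam a b /\ mid_assoc mu gam b a.
  case: hab => [[c ->] | [[c ->] | hspan]].
  - by split; [apply: mid_assoc_embl | apply: mid_assoc_embr].
  - by split; [apply: mid_assoc_embr | apply: mid_assoc_embl].
  apply: alt_span_mid_assoc ha _; apply/hspan.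
  by exists 0, 1; rewrite !cdE add0r scale1r.
exact: double_alternative.
Qed.
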